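(* Let $q\ge2$ be a prime power, let $2\le k<n$, and let $D$ be a $(k-1)$-$(n,k,1)_q$-design. Let $C$ be the set of all $(k+1)$-dimensional subspaces $U$ of $\mathbb{F}_q^n$ such that no element of $D$ is contained in $U$. If $C$ and its complement in the vertex set of $J_q(n,k+1)$ are both nonempty, then $C$ is a completely regular code in the Grassmann graph $J_q(n,k+1)$ with covering radius $1$.
   Context: The Grassmann graph $J_q(n,k)$ has as vertices the $k$-dimensional subspaces of $\mathbb{F}_q^n$, adjacent iff they meet in a $(k-1)$-dimensional subspace. A $t$-$(n,k,\lambda)_q$-design is a set $D$ of $k$-dimensional subspaces of $\mathbb{F}_q^n$ (without repetition) such that every $t$-dimensional subspace of $\mathbb{F}_q^n$ is contained in exactly $\lambda$ elements of $D$. A nonempty vertex set $C$ of a regular graph is a completely regular code with covering radius $1$ if every vertex is in $C$ or adjacent to $C$, not all vertices are in $C$, and there are numbers $\beta_0,\gamma_1$ such that every vertex of $C$ has exactly $\beta_0$ neighbours outside $C$ and every vertex outside $C$ has exactly $\gamma_1$ neighbours in $C$. *)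

From HB Require Import structures.
From mathcomp Require Import all_boot all_order all_algebra.
Unset Printing Implicit Defensive.
Import GRing.Theory.
Local Open Scope ring_scope.

Import VectorInternalTheory.
Section SubspaceFinite.
Variables (F : finFieldType) (n : nat).
HB.instance Definition _ := [Countable of {vspace 'rV[F]_n} by <:].
HB.instance Definition _ := [Finite of {vspace 'rV[F]_n} by <:].
End SubspaceFinite.

Definition grass_verts (F : finFieldType) (n k : nat) : {set {vspace 'rV[F]_n}} :=
  [set U : {vspace 'rV[F]_n} | \dim U == k].

Definition grass_adj (F : finFieldType) (n k : nat) (U W : {vspace 'rV[F]_n}) : bool :=
  (\dim (U :&: W)%VS == k.-1)%N.

Definition is_design (F : finFieldType) (n t k lam : nat)
    (D : {set {vspace 'rV[F]_n}}) : Prop :=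
  D \subset grass_verts F n k /\
  forall T : {vspace 'rV[F]_n}, \dim T = t ->
    #|[set B in D | (T <= B)%VS]| = lam.

Definition crc_radius1 {T : finType} (V : {set T}) (adj : rel T) (C : {set T}) : Prop :=
  [/\ C != set0, C \subset V,
      (forall x, x \in V -> x \in C \/ exists2 y, y \in C & adj x y),
      ~~ (V \subset C) &
      exists beta0 gamma1 : nat,
        (forall x, x \in C -> #|[set y in V :\: C | adj x y]| = beta0) /\
        (forall x, x \in V :\: C -> #|[set y in C | adj x y]| = gamma1)].

From HB Require Import structures.
From mathcomp Require Import all_boot all_order all_algebra.
From mathcomp Require Import zify.
Import GRing.Theory.

(* Since a (k-1)-space lies in exactly one block, a (k+1)-space contains at
   most one block.  For a vertex x, call a neighbour y outside C "fresh" when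
   it contains no block of x.  Fresh neighbours correspond bijectively to
   flags T < K <= x (of dimensions k-1 and k) with T in no block of x, via
   (T, K) |-> blk T + K, where blk T is the block through T.  Thus:
   - for x in C, all outer neighbours are fresh and their number is the number
     of such flags in x;
   - for x outside C, with block B0, the neighbours of x in C are all
     neighbours minus those through B0 minus the fresh ones.
   Each count involved depends only on the flag B0 <= x (resp. on x) up to a
   linear automorphism of F^n, and GL_n(F) acts transitively on flags of
   subspaces of given dimensions; hence both degrees are constant. *)

Section SubspaceFacts.
Variables (K : fieldType) (vT : vectType K).
Implicit Types (U W X Y A B T : {vspace vT}).

Lemma subv_dim_eq U W : (U <= W)%VS -> (\dim W <= \dim U)%N -> U = W.
Proof. by move=> sUW leWU; apply/eqP; rewrite eqEdim sUW leWU. Qed.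

Lemma hyperplanes_meet {U W Y m} :
  (U <= Y)%VS -> (W <= Y)%VS -> \dim U = m -> \dim W = m -> \dim Y = m.+1 ->
  U != W -> \dim (U :&: W) = m.-1 /\ (U + W)%VS = Y.
Proof.
move=> sUY sWY dU dW dY neUW.
have sUWY : (U + W <= Y)%VS by rewrite subv_add sUY sWY.
have dUW_ge : (m <= \dim (U + W))%N by rewrite -dU dimvS // addvSl.
have dUW_le : (\dim (U + W) <= m.+1)%N by rewrite -dY dimvS.
have dUW_neq : \dim (U + W) != m.
  apply: contra neUW => /eqP dUW.
  have eU : U = (U + W)%VS by apply: subv_dim_eq; rewrite ?addvSl // dUW dU.
  have eW : W = (U + W)%VS by apply: subv_dim_eq; rewrite ?addvSr // dUW dW.
  by rewrite eU -eW.
have dUW : \dim (U + W) = m.+1 by lia.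
split; last by apply: subv_dim_eq; rewrite ?dUW ?dY.
by have := dimv_sum_cap U W; rewrite dUW dU dW; lia.
Qed.

Lemma capv_hyperplane {T B X m} :
  (T <= B)%VS -> (T <= X)%VS -> \dim T = m -> \dim B = m.+1 ->
  ~~ (B <= X)%VS -> (B :&: X)%VS = T.
Proof.
move=> sTB sTX dT dB nsBX.
have sT : (T <= B :&: X)%VS by rewrite subv_cap sTB sTX.
have le_dim : (\dim (B :&: X) <= m.+1)%N by rewrite -dB dimvS // capvSl.
have ne_dim : \dim (B :&: X) != m.+1.
  apply: contra nsBX => /eqP dBX; apply/capv_idPl.
  by apply: subv_dim_eq; rewrite ?capvSl // dBX dB.
by apply/esym/subv_dim_eq => //; rewrite dT; lia.
Qed.

Lemma flag_span_meet {T S X B m} :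
  (T <= S)%VS -> (S <= X)%VS -> (T <= B)%VS -> ~~ (B <= X)%VS ->
  \dim T = m -> \dim S = m.+1 -> \dim B = m.+1 ->
  [/\ \dim (B + S) = m.+2, (X :&: (B + S))%VS = S & (B :&: X)%VS = T].
Proof.
move=> sTS sSX sTB nsBX dT dS dB.
have nsBS : ~~ (B <= S)%VS by apply: contra nsBX => sBS; apply: subv_trans sSX.
have dBS : \dim (B + S) = m.+2.
  by have := dimv_sum_cap B S; rewrite (capv_hyperplane sTB sTS dT dB nsBS); lia.
have nsBSX : ~~ (B + S <= X)%VS by apply: contra nsBX; apply: subv_trans (addvSl B S).
split=> //; last exact: capv_hyperplane sTB (subv_trans sTS sSX) dT dB nsBX.
by rewrite capvC (capv_hyperplane (addvSr B S) sSX dS dBS nsBSX).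
Qed.

Lemma exists_subv_dim {U m} :
  (m <= \dim U)%N -> exists2 W, (W <= U)%VS & \dim W = m.
Proof.
move=> le_mU; set e := vbasis U.
have free_e : free e := basis_free (vbasisP U).
exists <<take m e>>%VS; first by apply/span_subvP => v /mem_take; apply: vbasis_mem.
have /eqnP -> : free (take m e).
  by apply: (@catl_free _ _ (drop m e)); rewrite cat_take_drop.
rewrite size_take size_tuple; case: ltnP => // le_Um.
by apply/eqP; rewrite eqn_leq le_mU le_Um.
Qed.

Lemma adapted_basis {A X} : (A <= X)%VS ->
  basis_of X (vbasis A ++ vbasis (X :\: A)) /\
  basis_of fullv (vbasis A ++ vbasis (X :\: A) ++ vbasis (fullv :\: X)).
Proof.
move=> sAX.
have eX : (A + (X :\: A))%VS = X.
  by rewrite addvC -[in RHS](addv_diff_cap X A) (capv_idPr sAX).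
have bX : basis_of X (vbasis A ++ vbasis (X :\: A)).
  rewrite -{1}eX; apply: cat_basis; try exact: vbasisP.
  by apply/directv_addP; rewrite capvC capv_diff.
have eF : (X + (fullv :\: X))%VS = fullv.
  by rewrite addvC -[in RHS](addv_diff_cap fullv X) capfv.
split=> //; rewrite catA -{1}eF; apply: cat_basis; try exact: vbasisP; try exact: bX.
by apply/directv_addP; rewrite capvC capv_diff.
Qed.

Lemma flag_transport A X A' X' : (A <= X)%VS -> (A' <= X')%VS ->
  \dim A = \dim A' -> \dim X = \dim X' ->
  exists f : 'End(vT), [/\ lker f == 0%VS, (f @: A)%VS = A' & (f @: X)%VS = X'].
Proof.
move=> sAX sAX' dA dX.
have dim_diff Y Z : (Z <= Y)%VS -> \dim (Y :\: Z) = (\dim Y - \dim Z)%N.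
  by move=> sZY; have := dimv_cap_compl Y Z; rewrite (capv_idPr sZY); lia.
have [bX b] := adapted_basis sAX; have [bX' b'] := adapted_basis sAX'.
set e1 := vbasis A in bX b; set e2 := vbasis (X :\: A) in bX b.
set e3 := vbasis (fullv :\: X) in b.
set e1' := vbasis A' in bX' b'; set e2' := vbasis (X' :\: A') in bX' b'.
set e3' := vbasis (fullv :\: X') in b'.
have s1 : size e1 = size e1' by rewrite !size_tuple.
have s2 : size e2 = size e2' by rewrite !size_tuple !dim_diff // dA dX.
have s3 : size e3 = size e3' by rewrite !size_tuple !dim_diff ?subvf // dX.
have [g g_e] := linear_of_free (e1 ++ e2 ++ e3) (e1' ++ e2' ++ e3').
pose f : 'End(vT) := linfun g.
have : map f (e1 ++ e2 ++ e3) = e1' ++ e2' ++ e3'.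
  rewrite -g_e ?(basis_free b) ?size_cat ?s1 ?s2 ?s3 //.
  by apply: eq_map => v; rewrite lfunE.
rewrite !map_cat => /eqP.
rewrite eqseq_cat ?size_map // eqseq_cat ?size_map // => /and3P[/eqP f1 /eqP f2 /eqP f3].
have imf : limg f = fullv.
  by rewrite -{1}(span_basis b) limg_span !map_cat f1 f2 f3 (span_basis b').
exists f; split.
- have := limg_ker_dim f fullv; rewrite capfv imf => /eqP.
  by rewrite -{2}(add0n (\dim fullv)) eqn_add2r dimv_eq0.
- by rewrite -(span_basis (vbasisP A)) limg_span f1 (span_basis (vbasisP A')).
- by rewrite -(span_basis bX) limg_span map_cat f1 f2 (span_basis bX').
Qed.

Lemma limg_ker0_inj (f : 'End(vT)) :
  lker f == 0%VS -> injective (fun U => (f @: U)%VS).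
Proof. by move=> kf U W /eqP; rewrite eq_limg_ker0 // => /eqP. Qed.

End SubspaceFacts.

Arguments limg_ker0_inj {K vT f}.
Arguments flag_transport {K vT A X A' X'}.
Arguments exists_subv_dim {K vT U m}.
Arguments hyperplanes_meet {K vT U W Y m}.
Arguments flag_span_meet {K vT T S X B m}.

Lemma card_set_inj (T : finType) (g : T -> T) (P Q : pred T) :
  injective g -> (forall y, Q (g y) = P y) ->
  #|[set y | Q y]| = #|[set y | P y]|.
Proof.
move=> g_inj gQ; rewrite -(card_preimset [set y | Q y] g_inj).
by apply: eq_card => y; rewrite !inE gQ.
Qed.

(* In a graph with symmetric adjacency, a proper nonempty set C of vertices
   with constant outer degree beta0 > 0 on C and constant inner degree gamma1
   outside C is a completely regular code with covering radius 1: gamma1 > 0,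
   as it is witnessed at an outer neighbour of a vertex of C. *)
Lemma crc_radius1_intro {T : finType} {V C : {set T}} {adj : rel T}
    {beta0 gamma1 : nat} :
  C \subset V -> C != set0 -> V :\: C != set0 ->
  (forall x y, adj x y -> adj y x) ->
  (forall x, x \in C -> #|[set y in V :\: C | adj x y]| = beta0) ->
  (forall x, x \in V :\: C -> #|[set y in C | adj x y]| = gamma1) ->
  (0 < beta0)%N -> crc_radius1 V adj C.
Proof.
move=> sCV C0 VC0 adj_sym beta_C gamma_VC beta_gt0.
have [c cC] := set0Pn _ C0.
have : (0 < #|[set y in V :\: C | adj c y]|)%N by rewrite beta_C.
rewrite card_gt0 => /set0Pn[y]; rewrite inE => /andP[yVC acy].
have gamma_gt0 : (0 < gamma1)%N.
  rewrite -(gamma_VC y yVC) card_gt0; apply/set0Pn; exists c.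
  by rewrite inE cC adj_sym.
split=> //; last by exists beta0, gamma1.
- move=> x xV; case/boolP: (x \in C) => xC; [by left | right].
  have : (0 < #|[set z in C | adj x z]|)%N by rewrite gamma_VC // inE xC.
  by rewrite card_gt0 => /set0Pn[z]; rewrite inE => /andP[zC axz]; exists z.
- by rewrite -setD_eq0.
Qed.

Section FlagCounts.
Variables (F : finFieldType) (n k : nat).
Local Notation vs := {vspace 'rV[F]_n}.
Implicit Types (R x : vs).

Definition flag_count R x := #|[set p : vs * vs | [&& \dim p.1 == k.-1,
  \dim p.2 == k, (p.1 <= p.2)%VS, (p.2 <= x)%VS & ~~ (p.1 <= R)%VS]]|.

Definition nbr_count x :=
  #|[set y in grass_verts F n k.+1 | grass_adj F n k.+1 x y]|.

Definition over_count R x :=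
  #|[set y in grass_verts F n k.+1 | (y != x) && (R <= y)%VS]|.

Lemma counts_invariant (f : 'End('rV[F]_n)) R x : lker f == 0%VS ->
  [/\ flag_count (f @: R) (f @: x) = flag_count R x,
      nbr_count (f @: x) = nbr_count x &
      over_count (f @: R) (f @: x) = over_count R x].
Proof.
move=> kf; have f_inj := limg_ker0_inj kf.
have f_dim U : \dim (f @: U) = \dim U by apply: limg_dim_eq; rewrite (eqP kf) capv0.
split.
- apply: (@card_set_inj _ (fun p : vs * vs => ((f @: p.1)%VS, (f @: p.2)%VS))).
    by move=> [a b] [c d] /= [/f_inj -> /f_inj ->].
  by move=> [a b] /=; rewrite !f_dim !limg_ker0.
- apply: (@card_set_inj _ (fun U => (f @: U)%VS)) => // y.
  by rewrite !inE /grass_adj -lker0_img_cap // !f_dim.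
- apply: (@card_set_inj _ (fun U => (f @: U)%VS)) => // y.
  by rewrite !inE f_dim eq_limg_ker0 // limg_ker0.
Qed.

Lemma counts_transport R x R' x' : (R <= x)%VS -> (R' <= x')%VS ->
  \dim R = \dim R' -> \dim x = \dim x' ->
  [/\ flag_count R x = flag_count R' x', nbr_count x = nbr_count x' &
      over_count R x = over_count R' x'].
Proof.
move=> sRx sRx' dR dx; have [f [kf <- <-]] := flag_transport sRx sRx' dR dx.
by have [-> -> ->] := counts_invariant f R x kf.
Qed.

Lemma flag_count0_gt0 x :
  (0 < k.-1)%N -> (k <= \dim x)%N -> (0 < flag_count 0 x)%N.
Proof.
move=> k1_gt0 k_le_x; have [K sKx dK] := exists_subv_dim k_le_x.
have k1_le_K : (k.-1 <= \dim K)%N by rewrite dK leq_pred.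
have [T sTK dT] := exists_subv_dim k1_le_K.
rewrite card_gt0; apply/set0Pn; exists (T, K).
by rewrite inE /= dT dK sTK sKx subv0 -dimv_eq0 dT -lt0n k1_gt0 !eqxx.
Qed.

End FlagCounts.

Arguments counts_transport {F n k R x R' x'}.

Section BlockFreeCode.
Variables (F : finFieldType) (n k : nat).
Hypothesis k_ge2 : (2 <= k)%N.
Variable D : {set {vspace 'rV[F]_n}}.
Hypothesis D_design : is_design F n k.-1 k 1 D.

Local Notation vs := {vspace 'rV[F]_n}.
Local Notation V := (grass_verts F n k.+1).
Local Notation adj := (grass_adj F n k.+1).
Local Notation C := [set U in V | [forall B in D, ~~ (B <= U)%VS]].
Implicit Types (T B x y : vs).

Lemma block_dim {B} : B \in D -> \dim B = k.
Proof. by case: D_design => /subsetP sDV _ /sDV; rewrite inE => /eqP. Qed.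

Lemma block_unique {T B B'} : \dim T = k.-1 -> B \in D -> B' \in D ->
  (T <= B)%VS -> (T <= B')%VS -> B = B'.
Proof.
case: D_design => _ lambda1 dT BD B'D sTB sTB'.
have /eqP/cards1P[B0 DT] := lambda1 T dT.
have : B \in [set B0] by rewrite -DT inE BD sTB.
have : B' \in [set B0] by rewrite -DT inE B'D sTB'.
by rewrite !inE => /eqP -> /eqP ->.
Qed.

Definition blk T := odflt 0%VS [pick B in D | (T <= B)%VS].

Lemma blkP {T} : \dim T = k.-1 -> blk T \in D /\ (T <= blk T)%VS.
Proof.
case: D_design => _ lambda1 dT; rewrite /blk; case: pickP => [B /andP[] //|no_block].
have : #|[set B in D | (T <= B)%VS]| != 0 by rewrite lambda1.
by rewrite cards_eq0 => /set0Pn[B]; rewrite inE no_block.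
Qed.

Lemma blk_eq {T B} : \dim T = k.-1 -> B \in D -> (T <= B)%VS -> blk T = B.
Proof.
by move=> dT BD sTB; have [bD sTb] := blkP dT; apply: block_unique dT bD BD sTb sTB.
Qed.

(* A (k+1)-space contains at most one block: two distinct ones would meet in
   a (k-1)-space lying in both. *)
Lemma block_in_space_unique {y B B'} : \dim y = k.+1 -> B \in D -> B' \in D ->
  (B <= y)%VS -> (B' <= y)%VS -> B = B'.
Proof.
move=> dy BD B'D sBy sB'y; case: (eqVneq B B') => // neBB'.
have [dBB' _] := hyperplanes_meet sBy sB'y (block_dim BD) (block_dim B'D) dy neBB'.
exact: block_unique dBB' BD B'D (capvSl _ _) (capvSr _ _).
Qed.

Lemma blocks_of_space {x B0} {P : pred vs} : \dim x = k.+1 -> B0 \in D ->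
  (B0 <= x)%VS -> [forall B in D, (B <= x)%VS ==> P B] = P B0.
Proof.
move=> dx B0D sB0x; apply/forall_inP/idP => [all_P | PB0 B BD].
  by have := all_P B0 B0D; rewrite sB0x.
by apply/implyP => sBx; rewrite (block_in_space_unique dx BD B0D sBx sB0x).
Qed.

Lemma notin_codeE y : y \in V -> (y \notin C) = [exists B in D, (B <= y)%VS].
Proof.
by move=> yV; rewrite inE yV negb_forall_in; apply: eq_existsb => B; rewrite negbK.
Qed.

Definition fresh_nbr x y := [&& y \in V, y \notin C, adj x y &
  [forall B in D, (B <= x)%VS ==> ~~ (B <= y)%VS]].
Definition fresh_flag x (p : vs * vs) := [&& \dim p.1 == k.-1, \dim p.2 == k,
  (p.1 <= p.2)%VS, (p.2 <= x)%VS &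
  [forall B in D, (B <= x)%VS ==> ~~ (p.1 <= B)%VS]].

(* The bijection between them sends a flag (T, K) to blk T + K ... *)
Definition flag_span (p : vs * vs) := (blk p.1 + p.2)%VS.

Lemma flag_spanP {x p} : fresh_flag x p ->
  [/\ fresh_nbr x (flag_span p), (x :&: flag_span p)%VS = p.2
    & (blk p.1 :&: x)%VS = p.1].
Proof.
case: p => T K /and5P[/eqP/= dT /eqP/= dK /= sTK sKx /forall_inP T_free].
have [BD sTB] := blkP dT; rewrite /flag_span /=; set B := blk T in BD sTB *.
have nsBx : ~~ (B <= x)%VS by apply/negP => sBx; have := T_free B BD; rewrite sBx sTB.
have dk : k = k.-1.+1 by lia.
have [dy capK capT] :=
  flag_span_meet sTK sKx sTB nsBx dT (etrans dK dk) (etrans (block_dim BD) dk).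
rewrite -dk in dy; split=> //.
rewrite /fresh_nbr inE dy eqxx notin_codeE ?inE ?dy //= /grass_adj capK dK eqxx.
apply/andP; split; first by apply/exists_inP; exists B; rewrite ?addvSl.
apply/forall_inP => B' B'D; apply/implyP => sB'x; apply: contra nsBx => sB'y.
by rewrite -(block_in_space_unique dy B'D BD sB'y (addvSl _ _)).
Qed.

(* ... and its inverse sends y to (B :&: x :&: y, x :&: y), B the block of y. *)
Lemma fresh_nbr_flag {x y} : fresh_nbr x y ->
  exists2 p, fresh_flag x p & y = flag_span p.
Proof.
move=> /and4P[yV ynC /eqP dK /forall_inP y_free].
move: (ynC); rewrite notin_codeE // => /exists_inP[B BD sBy].
have nsBx : ~~ (B <= x)%VS by apply/negP => sBx; have := y_free B BD; rewrite sBx sBy.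
move: yV; rewrite inE => /eqP dy; set K := (x :&: y)%VS in dK.
have neBK : B != K by apply: contra nsBx => /eqP ->; apply: capvSl.
have [dT spanY] := hyperplanes_meet sBy (capvSr x y) (block_dim BD) dK dy neBK.
exists ((B :&: K)%VS, K); last by rewrite /flag_span /= (blk_eq dT BD (capvSl _ _)) spanY.
rewrite /fresh_flag /= dT dK !eqxx capvSr capvSl /=.
apply/forall_inP => B' B'D; apply/implyP => sB'x; apply: contra nsBx => sTB'.
by rewrite (block_unique dT BD B'D (capvSl _ _) sTB').
Qed.

(* A flag is recovered from its span: K = x :&: y and T = blk T :&: x, where
   blk T is determined as the block of y. *)
Lemma card_fresh_nbr x :
  #|[set y | fresh_nbr x y]| = #|[set p | fresh_flag x p]|.
Proof.
have -> : [set y | fresh_nbr x y] = flag_span @: [set p | fresh_flag x p].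
  apply/setP => y; rewrite inE; apply/idP/imsetP => [/fresh_nbr_flag|].
    by case=> p p_fresh ->; exists p; rewrite ?inE.
  by case=> p; rewrite inE => p_fresh ->; have [] := flag_spanP p_fresh.
apply: card_in_imset => -[T K] [T' K']; rewrite !inE => fresh fresh' eq_span.
have [/and3P[yV _ _] capK capT] := flag_spanP fresh.
have [_ capK' capT'] := flag_spanP fresh'.
have [/and5P[/eqP dT _ _ _ _] /and5P[/eqP dT' _ _ _ _]] := conj fresh fresh'.
have [[bD _] [b'D _]] := (blkP dT, blkP dT').
move: yV; rewrite inE => /eqP dy.
have eq_blk : blk T = blk T'.
  by apply: block_in_space_unique dy bD b'D (addvSl _ _) _; rewrite eq_span addvSl.
rewrite /flag_span /= in eq_span capK capK' capT capT'.
have -> : K = K' by rewrite -capK -capK' eq_span.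
by rewrite -capT -capT' eq_blk.
Qed.

(* For x in C, which contains no block, every outer neighbour and every flag
   is fresh; as a (k-1)-space is nonzero, the flags are counted by
   flag_count 0 x. *)
Lemma outer_degree x : x \in C ->
  #|[set y in V :\: C | adj x y]| = flag_count F n k 0 x.
Proof.
move=> xC; move: (xC); rewrite inE => /andP[_ /forall_inP x_free].
have no_block (P : pred vs) : [forall B in D, (B <= x)%VS ==> P B].
  by apply/forall_inP => B BD; rewrite (negbTE (x_free B BD)).
transitivity #|[set y | fresh_nbr x y]|.
  apply: eq_card => y; rewrite !inE /fresh_nbr.
  rewrite (no_block (fun B => ~~ (B <= y)%VS)) andbT !inE.
  by case: (_ == k.+1) => //=; rewrite andbT.
rewrite card_fresh_nbr; apply: eq_card => -[T K].
rewrite !inE /fresh_flag /= (no_block (fun B => ~~ (T <= B)%VS)).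
case: eqP => //= dT; have k1_gt0 : (0 < k.-1)%N by lia.
by rewrite subv0 -dimv_eq0 dT -lt0n k1_gt0 !andbT.
Qed.

Lemma adj_through_block {x y B0} : x \in V -> y \in V -> B0 \in D ->
  (B0 <= x)%VS -> (B0 <= y)%VS -> adj x y = (y != x).
Proof.
rewrite !inE => /eqP dx /eqP dy B0D sB0x sB0y; rewrite /grass_adj /=.
case: (eqVneq y x) => [-> | neyx]; first by rewrite capvv dx; lia.
have dB0_le : (k <= \dim (x :&: y))%N by rewrite -(block_dim B0D) dimvS // subv_cap sB0x.
suff : (\dim (x :&: y) < \dim x)%N by rewrite dx; lia.
rewrite ltn_neqAle dimvS ?capvSl // andbT; apply: contra neyx => /eqP dxy.
have exy : (x :&: y)%VS = x by apply: subv_dim_eq; rewrite ?capvSl ?dxy.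
have sxy : (x <= y)%VS by rewrite -exy capvSr.
by rewrite eq_sym eqEdim sxy dx dy leqnn.
Qed.

(* For x outside C, with block B0, the neighbours of x split into those in C,
   those through B0, and the fresh ones, counted by flag_count B0 x. *)
Lemma inner_degree {x B0} : x \in V -> B0 \in D -> (B0 <= x)%VS ->
  #|[set y in C | adj x y]| =
    (nbr_count F n k x - (over_count F n k B0 x + flag_count F n k B0 x))%N.
Proof.
move=> xV B0D sB0x; have dx : \dim x = k.+1 by move: xV; rewrite inE => /eqP.
set N := [set y in V | adj x y]; set O := [set y | (B0 <= y)%VS].
have blocked y : (B0 <= y)%VS -> [forall B in D, ~~ (B <= y)%VS] = false.
  move=> sB0y; apply/negbTE; rewrite negb_forall_in.
  by apply/exists_inP; exists B0; rewrite ?negbK.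
have over_nbr : over_count F n k B0 x = #|(N :\: C) :&: O|.
  apply: eq_card => y; rewrite !inE.
  case/boolP: (B0 <= y)%VS => sB0y; rewrite ?andbF ?andbT // blocked //.
  case/boolP: (\dim y == k.+1) => yV //=.
  by rewrite (adj_through_block xV _ B0D sB0x sB0y) ?inE.
have fresh_count : flag_count F n k B0 x = #|(N :\: C) :\: O|.
  rewrite /flag_count -[RHS](@eq_card _ [set y | fresh_nbr x y]); last first.
    move=> y; rewrite !inE /fresh_nbr (blocks_of_space dx B0D sB0x) !inE.
    by case: (\dim y == k.+1); case: (B0 <= y)%VS; rewrite /= ?andbF ?andbT.
  rewrite card_fresh_nbr; apply: eq_card => p; rewrite !inE /fresh_flag.
  by rewrite (blocks_of_space dx B0D sB0x).
have -> : [set y in C | adj x y] = N :&: C.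
  by apply/setP => y; rewrite !inE; case: (_ == k.+1); rewrite //= andbC.
rewrite /nbr_count -/N -(cardsID C N) -(cardsID O (N :\: C)) -over_nbr -fresh_count.
by rewrite addnK.
Qed.

Lemma outside_code_block {x} : x \in V :\: C -> exists2 B, B \in D & (B <= x)%VS.
Proof. by rewrite in_setD => /andP[xnC xV]; apply/exists_inP; rewrite -notin_codeE. Qed.

(* All vertices of C have the same outer degree, since flag_count 0 x only
   depends on \dim x. *)
Lemma outer_degree_const {c} x : c \in C -> x \in C ->
  #|[set y in V :\: C | adj x y]| = flag_count F n k 0 c.
Proof.
move=> cC xC; rewrite outer_degree //.
have [dc dx] : \dim c = k.+1 /\ \dim x = k.+1.
  by move: cC xC; rewrite !inE => /andP[/eqP -> _] /andP[/eqP -> _].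
have dxc : \dim x = \dim c by rewrite dx dc.
by have [-> _ _] := counts_transport (k := k) (sub0v x) (sub0v c) erefl dxc.
Qed.

(* All vertices outside C have the same inner degree, since the counts in
   inner_degree only depend on the dimensions of the flag (block <= vertex). *)
Lemma inner_degree_const {x0 B0} x : x0 \in V -> B0 \in D -> (B0 <= x0)%VS ->
  x \in V :\: C -> #|[set y in C | adj x y]| =
    (nbr_count F n k x0 - (over_count F n k B0 x0 + flag_count F n k B0 x0))%N.
Proof.
rewrite inE => /eqP dx0 B0D sB0x0 xVC; have [B BD sBx] := outside_code_block xVC.
have xV : x \in V by move: xVC; rewrite inE => /andP[].
rewrite (inner_degree xV BD sBx); move: xV; rewrite inE => /eqP dx.
have dB : \dim B = \dim B0 by rewrite (block_dim BD) (block_dim B0D).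
have dxx0 : \dim x = \dim x0 by rewrite dx dx0.
by have [-> -> ->] := counts_transport (k := k) sBx sB0x0 dB dxx0.
Qed.

End BlockFreeCode.

Arguments outside_code_block {F n k D x}.
Arguments outer_degree_const {F n k} k_ge2 {D} D_design {c} x.
Arguments inner_degree_const {F n k} k_ge2 {D} D_design {x0 B0} x.

Local Open Scope ring_scope.

Theorem theorem4p2 (F : finFieldType) (n k : nat)
  (hk : (2 <= k)%N) (hkn : (k < n)%N)
  (D : {set {vspace 'rV[F]_n}})
  (hD : is_design F n k.-1 k 1 D) :
  let C := [set U in grass_verts F n k.+1 | [forall B in D, ~~ (B <= U)%VS]] in
  C != set0 -> grass_verts F n k.+1 :\: C != set0 ->
  crc_radius1 (grass_verts F n k.+1) (grass_adj F n k.+1) C.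
Proof.
move=> C C_ne0 VC_ne0; have [c cC] := set0Pn _ C_ne0.
have [x0 x0VC] := set0Pn _ VC_ne0; have [B0 B0D sB0x0] := outside_code_block x0VC.
have x0V : x0 \in grass_verts F n k.+1 by move: x0VC; rewrite inE => /andP[].
apply: (crc_radius1_intro (beta0 := flag_count F n k 0 c)
  (gamma1 := (nbr_count F n k x0 - (over_count F n k B0 x0 + flag_count F n k B0 x0))%N)).
- by apply/subsetP => x; rewrite inE => /andP[].
- exact: C_ne0.
- exact: VC_ne0.
- by move=> x y; rewrite /grass_adj capvC.
- by move=> x; apply: (outer_degree_const hk hD).
- by move=> x; exact (inner_degree_const hk hD x x0V B0D sB0x0).
- apply: flag_count0_gt0; first by rewrite -ltnS prednK // ltnW.
  by move: cC; rewrite !inE => /andP[/eqP -> _].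
Qed.
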